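(* For any finite, simple, connected graph $G$, if $\gamma_P(G)=1$, then $\gamma_P(G\,\Box\,P_2)\le 2$.
   Context: The Cartesian product $G\,\Box\,H$ has vertex set $V(G)\times V(H)$, with $(g,h)$ adjacent to $(g',h')$ iff either $g=g'$ and $hh'\in E(H)$, or $h=h'$ and $gg'\in E(G)$; $P_2$ is the path on two vertices. For $U\subseteq V$, $cl(U)$ is obtained by coloring $U$ black and repeatedly applying: if a black vertex has exactly one white neighbor, that neighbor becomes black. $S$ is a power dominating set if $cl(N[S])=V$; $\gamma_P$ is the minimum size of a power dominating set. *)

From mathcomp Require Import all_boot.
Set Implicit Arguments. Unset Strict Implicit. Unset Printing Implicit Defensive.

Definition simple_graph (T : finType) (e : rel T) : Prop :=
  symmetric e /\ irreflexive e.

Definition connected_graph (T : finType) (e : rel T) : Prop :=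
  forall x y : T, connect e x y.

Definition nbhd (T : finType) (e : rel T) (v : T) : {set T} := [set w | e v w].
Definition closed_nbhd (T : finType) (e : rel T) (S : {set T}) : {set T} :=
  S :|: [set w | [exists v in S, e v w]].

Definition prop_step (T : finType) (e : rel T) (B : {set T}) : {set T} :=
  B :|: [set w | [exists v in B, (e v w) && (#|nbhd e v :\: B| == 1) && (w \notin B)]].

(* cl(U): repeat the propagation rule until nothing changes; since each non-final
   round adds a vertex, #|T| rounds suffice. *)
Definition cl (T : finType) (e : rel T) (U : {set T}) : {set T} :=
  iter #|T| (prop_step e) U.

Definition power_dominating (T : finType) (e : rel T) (S : {set T}) : bool :=
  cl e (closed_nbhd e S) == [set: T].

Definition gammaP (T : finType) (e : rel T) : nat :=
  \big[minn/#|T|]_(S : {set T} | power_dominating e S) #|S|.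

Definition cart_rel (T1 T2 : finType) (e1 : rel T1) (e2 : rel T2) : rel (T1 * T2) :=
  fun x y => ((x.1 == y.1) && e2 x.2 y.2) || ((x.2 == y.2) && e1 x.1 y.1).

Definition P2_rel : rel bool := fun a b => a != b.

From mathcomp Require Import all_boot all_order.
Import Order.TTheory.

Set Implicit Arguments.
Unset Strict Implicit.
Unset Printing Implicit Defensive.

(* Lift a power dominating set S of G to S x V(H) in G [] H.  A vertex (u, c)
   with u black in every layer has as white neighbours exactly the (x, c) with
   x a white neighbour of u in G, so the propagation in G [] H is the
   propagation in G copied to every layer.  Hence
   gammaP (G [] H) <= gammaP G * |V(H)|, and for H = P_2 this gives the bound 2. *)

Section PowerDomination.
Variables (T : finType) (e : rel T).

Lemma gammaP_le (S : {set T}) : power_dominating e S -> gammaP e <= #|S|.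
Proof. by rewrite /gammaP -minEnat -leEnat; apply: bigmin_le_cond. Qed.

Lemma iter_prop_step_setT n : iter n (prop_step e) [set: T] = [set: T].
Proof. by elim: n => //= n ->; rewrite /prop_step setTU. Qed.

Lemma iter_prop_step_ge_card (S : {set T}) n :
  power_dominating e S -> #|T| <= n ->
  iter n (prop_step e) (closed_nbhd e S) = [set: T].
Proof.
move=> /eqP pdS /subnK <-.
by rewrite iterD [iter #|T| _ _]pdS iter_prop_step_setT.
Qed.

Lemma power_dominating_setT : power_dominating e [set: T].
Proof. by rewrite /power_dominating /closed_nbhd setTU /cl iter_prop_step_setT. Qed.

Lemma gammaP_attained : exists2 S, power_dominating e S & gammaP e = #|S|.
Proof.
have card_le (S : {set T}) : power_dominating e S -> #|S| <= #|T|.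
  by move=> _; apply: max_card.
rewrite /gammaP -minEnat.
have [S pdS ->] :=
  @eq_bigmin _ nat _ #|T| _ _ (fun S : {set T} => #|S|) power_dominating_setT card_le.
by exists S.
Qed.

End PowerDomination.

Section CartesianProduct.
Variables (T T' : finType) (e : rel T) (f : rel T').
Notation cart := (cart_rel e f).

Lemma nbhd_cart_setXT (B : {set T}) u c : u \in B ->
  nbhd cart (u, c) :\: setX B [set: T'] = [set (x, c) | x in nbhd e u :\: B].
Proof.
move=> uB; apply/setP => -[w b]; rewrite !inE /cart_rel /= andbT.
apply/idP/imsetP => [/andP [wB /orP [/andP [/eqP wu _] | /andP [/eqP bc euw]]]|].
- by rewrite -wu uB in wB.
- by exists w; rewrite ?inE ?wB ?euw // bc.
- by case=> x; rewrite !inE => /andP [xB eux] [-> ->]; rewrite xB eqxx eux orbT.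
Qed.

Lemma card_nbhd_cart_setXT (B : {set T}) u c : u \in B ->
  #|nbhd cart (u, c) :\: setX B [set: T']| = #|nbhd e u :\: B|.
Proof. by move=> uB; rewrite nbhd_cart_setXT // card_imset // => x y []. Qed.

Lemma prop_step_cart_setXT (B : {set T}) :
  prop_step cart (setX B [set: T']) = setX (prop_step e B) [set: T'].
Proof.
apply/setP => -[w b]; rewrite /prop_step !inE /= !andbT.
case wB: (w \in B) => //=; apply/existsP/existsP => [[[u c]]|[u]].
- rewrite !inE /= andbT => /and3P [uB /andP [] + /eqP card1 _].
  rewrite /cart_rel /= => /orP [/andP [/eqP uw _]|/andP [_ euw]].
    by rewrite uw wB in uB.
  by exists u; rewrite uB euw -(card_nbhd_cart_setXT c uB) card1.
- move=> /and3P [uB /andP [euw card1] _]; exists (u, b).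
  by rewrite !inE /= uB card_nbhd_cart_setXT // card1 /cart_rel /= eqxx euw orbT.
Qed.

Lemma closed_nbhd_cart_setXT (S : {set T}) :
  closed_nbhd cart (setX S [set: T']) = setX (closed_nbhd e S) [set: T'].
Proof.
apply/setP => -[w b]; rewrite /closed_nbhd !inE /= !andbT.
case wS: (w \in S) => //=; apply/existsP/existsP => [[[u c]]|[u /andP [uS euw]]].
- rewrite !inE /= andbT /cart_rel /= => /andP [uS /orP [/andP [/eqP uw _]|/andP [_ euw]]].
    by rewrite uw wS in uS.
  by exists u; rewrite uS.
- by exists (u, b); rewrite !inE /= uS /cart_rel /= eqxx euw orbT.
Qed.

Lemma iter_prop_step_cart_setXT n (B : {set T}) :
  iter n (prop_step cart) (setX B [set: T']) = setX (iter n (prop_step e) B) [set: T'].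
Proof. by elim: n => //= n ->; rewrite prop_step_cart_setXT. Qed.

Lemma power_dominating_cart_setXT (S : {set T}) :
  power_dominating e S -> power_dominating cart (setX S [set: T']).
Proof.
(* cl in G [] H runs #|T| * #|T'| rounds: enough for G unless H is empty. *)
move=> pdS; apply/eqP/setP => -[x y]; rewrite /cl closed_nbhd_cart_setXT.
rewrite iter_prop_step_cart_setXT card_prod !inE /= andbT.
have [T'0 | T'_pos] := posnP #|T'|; first by have := card0_eq T'0 y; rewrite !inE.
by rewrite iter_prop_step_ge_card ?inE ?leq_pmulr.
Qed.

Lemma gammaP_cart_le : gammaP cart <= gammaP e * #|T'|.
Proof.
have [S pdS ->] := gammaP_attained e.
by rewrite -cardsT -cardsX gammaP_le ?power_dominating_cart_setXT.
Qed.

End CartesianProduct.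

Theorem mainTheorem12 (T : finType) (e : rel T) :
  simple_graph e -> connected_graph e ->
  gammaP e = 1 ->
  gammaP (cart_rel e P2_rel) <= 2.
Proof.
move=> _ _ gammaP1.
by have := gammaP_cart_le e P2_rel; rewrite gammaP1 card_bool.
Qed.
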